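(* Let $G = H\times N$ be a finite group that is the direct product of subgroups $H$ and $N$, and identify $G/N$ with $H$. Let $i\ge 2$. Then for every $\bar f\in\hat H^{-i}(G,\mathbb{Z})$ and every $\bar\psi\in\hat H^{i}(H,\mathbb{Z})$, $$\bar f\cup \mathrm{Inf}^G_H(\bar\psi) = \mathrm{Cor}^G_H\big(\mathrm{Rsd}^G_H(\bar f)\cup\bar\psi\big)\quad\text{in } \hat H^0(G,\mathbb{Z}),$$ where $\cup$ denotes the cup products $\hat H^{-i}(G,\mathbb{Z})\times\hat H^{i}(G,\mathbb{Z})\to\hat H^0(G,\mathbb{Z})$ and $\hat H^{-i}(H,\mathbb{Z})\times\hat H^{i}(H,\mathbb{Z})\to\hat H^0(H,\mathbb{Z})$, $\mathrm{Inf}^G_H\colon \hat H^i(H,\mathbb{Z})\to\hat H^i(G,\mathbb{Z})$ is inflation via $G\to G/N=H$, and $\mathrm{Cor}^G_H\colon\hat H^0(H,\mathbb{Z})\to\hat H^0(G,\mathbb{Z})$ is corestriction.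
   Context: $\mathbb{Z}$ carries trivial action and $\hat H^j$ denotes Tate cohomology. Tate cohomology of a finite group $G$ with coefficients in $A$ is computed from the complete standard complex $X$: for $j\ge0$, $X_j=\mathbb{Z}[G^{j+1}]$ (diagonal action, usual homogeneous differential); for $j\ge1$, $X_{-j}=\mathrm{Hom}_{\mathbb{Z}}(X_{j-1},\mathbb{Z})$, a free $\mathbb{Z}$-module with basis $(s_1^*,\dots,s_j^* )$, $s_k\in G$, the dual basis element of $(s_1,\dots,s_j)$, with action $g(s_1^*,\dots,s_j^* ) = ((gs_1)^*,\dots,(gs_j)^* )$; and $\hat H^j(G,A)=H^j(\mathrm{Hom}_G(X,A))$. Thus a class in $\hat H^{-i}(G,\mathbb{Z})$ is represented by a $G$-invariant cocycle $f$ on tuples $(s_1^*,\dots,s_i^* )$, $s_k\in G$. The residuation map $\mathrm{Rsd}^G_H\colon \hat H^{-i}(G,\mathbb{Z})\to \hat H^{-i}(H,\mathbb{Z})$ (for $i\ge2$, $G=H\times N$, $G/N\cong H$) is induced on cochains by $$\mathrm{Rsd}(f)(h_1^*,h_2^*,\dots,h_i^* ) = \sum_{n_2,\dots,n_i\in N} f\big(h_1^*,(h_2n_2)^*,\dots,(h_in_i)^*\big),\qquad h_k\in H.$$ (In general, for a normal subgroup $M\lhd G$, residuation $\hat H^{-i}(G,A)\to\hat H^{-i}(G/M,A/I_MA)$ is induced by $(\alpha^*,\alpha_2^*,\dots,\alpha_i^* )\mapsto \sum_{g_kM=\alpha_k,\,k\ge2} f(g^*,g_2^*,\dots,g_i^*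 )+I_MA$ with $g$ any single element of $\alpha$, where $I_M$ is the augmentation ideal of $\mathbb{Z}[M]$.) *)

(* Cochain-level description of the complete standard complex
   computing Tate cohomology with trivial Z coefficients. *)
From HB Require Import structures.
From mathcomp Require Import all_boot all_order all_algebra all_fingroup gproduct.
Set Implicit Arguments. Unset Strict Implicit. Unset Printing Implicit Defensive.
Import GRing.Theory Num.Theory.
Local Open Scope ring_scope.
Local Open Scope group_scope.

Section TateCochains.
Variable gT : finGroupType.
Implicit Types (A : {set gT}) (s : seq gT) (c : seq gT -> int).

(* a cochain of degree j is a Z-valued function on the basis of X_j:
   for j = i >= 0 the tuples (s_0,...,s_i) in G^{i+1};
   for j = -i < 0 the dual basis elements (s_1^#,...,s_i^#), s_k in G,
   encoded by the sequence [:: s_1; ...; s_i].  Values on sequences of the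
   wrong length or not in G are irrelevant. *)

Definition inG A s := all (fun x => x \in A) s.

Definition sumT A k (F : seq gT -> int) : int :=
  (\sum_(t : k.-tuple gT | inG A t) F t)%R.

(* G-equivariance (Hom_G) of a cochain with values in Z (trivial action):
   the action on both X_i and X_{-i} is diagonal left multiplication. *)
Definition g_invariant A k c :=
  forall g s, g \in A -> size s = k -> inG A s -> c (map (mulg g) s) = c s.

Definition drop_nth j s := take j s ++ drop j.+1 s.
Definition ins_nth j (x : gT) s := take j s ++ x :: drop j s.

Definition pos_cocycle A i c :=
  forall s, size s = i.+2 -> inG A s ->
    (\sum_(j < i.+2) (-1) ^+ j * c (drop_nth j s))%R = 0%R.

(* cocycle condition in degree -i, i >= 2: c o d = 0 where
   d : X_{-(i-1)} -> X_{-i} is the dual of d : X_{i-1} -> X_{i-2}, i.e.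
   d(s_1^#,...,s_{i-1}^#) = sum_{j} (-1)^j sum_{x in G} (..., x^# at slot j, ...). *)
Definition neg_cocycle A i c :=
  forall s, size s = i.-1 -> inG A s ->
    (\sum_(j < i) (-1) ^+ j * (\sum_(x in A) c (ins_nth j x s)))%R = 0%R.

(* Cup product H^{-i} x H^{i} -> H^0 via the diagonal approximation
   X_0 -> X_{-i} (x) X_i,  x_0 |-> sum_{t} (t_1^#,...,t_i^#) (x) (t_i,...,t_1,x_0)
   (Neukirch-Schmidt-Wingberg, Ch. I, Sect. 4). *)
Definition cup A i (f psi : seq gT -> int) (x0 : gT) : int :=
  sumT A i (fun t => f t * psi (rcons (rev t) x0))%R.

(* Inflation along G -> G/N = H, g = h n |-> h, for G = H x N. *)
Definition infl (H N : {set gT}) (psi : seq gT -> int) : seq gT -> int :=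
  fun s => psi (map (divgr H N) s).

(* Residuation Rsd^G_H on degree -i cochains (trivial coefficients):
   Rsd(f)(h_1^#,...,h_i^#) = sum_{n_2..n_i in N} f(h_1^#,(h_2 n_2)^#,...,(h_i n_i)^#). *)
Definition rsd (N : {set gT}) i (f : seq gT -> int) : seq gT -> int :=
  fun s => sumT N i.-1
    (fun n => f (head 1 s :: [seq p.1 * p.2 | p <- zip (behead s) n])).

(* Corestriction in degree 0: induced by the norm map
   N_{G/H} : Z^H -> Z^G, a |-> sum_{gH in G/H} g.a  (trivial action). *)
Definition cor0 (G H : {set gT}) (a : int) : int :=
  (\sum_(C in rcosets H G) a)%R.

End TateCochains.

From HB Require Import structures.
From mathcomp Require Import all_boot all_order all_algebra all_fingroup gproduct.
Import GRing.Theory Num.Theory.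
Set Implicit Arguments. Unset Strict Implicit. Unset Printing Implicit Defensive.

(* For G = H x N we prove the identity already at the level
   of cochains, i.e. as an equality of integers, which is stronger than the
   congruence modulo |G| asserted for classes in Ĥ^0(G,Z) = Z/|G|Z.
   1. Sums over tuples: G^i-sums unfold coordinatewise (sumTS), and a sum over
      A^k is invariant under left translation of all coordinates by a ∈ A.
   2. Direct products: every g ∈ G is uniquely h * n, so a sum over G^i is a
      double sum over h ∈ H^i and n ∈ N^i of the pointwise products h * n
      (sumT_dprod), and the inflated cochain only sees the H-part h.
   3. Fibre lemma: for a G-invariant f, the sum of f over the fibre
      {h * n | n ∈ N^i} equals |N| · Rsd(f)(h), because translating by n_1^{-1}
      moves the N-part of the first coordinate onto the remaining ones.
   4. The left-hand cup product is then Σ_h psi(rev h, 1) · |N| · Rsd(f)(h),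
      while corestriction multiplies the right-hand cup product by
      |G : H| = |N|; the two agree. *)

Section TupleSums.
Variable gT : finGroupType.
Local Open Scope group_scope.

Lemma sumT0 (A : {set gT}) (F : seq gT -> int) : sumT A 0 F = F [::].
Proof. by rewrite /sumT (big_pred1 [tuple]) // => t; rewrite tuple0 /= eqxx. Qed.

Lemma sumTS (A : {set gT}) k (F : seq gT -> int) :
  sumT A k.+1 F = (\sum_(x in A) sumT A k (fun t => F (x :: t)))%R.
Proof.
rewrite /sumT (reindex (fun p : gT * k.-tuple gT => [tuple of p.1 :: p.2])) /=.
  by rewrite -(pair_big_dep (fun x => x \in A) (fun _ (t : k.-tuple gT) => inG A t)
       (fun x (t : k.-tuple gT) => F (x :: val t))).
exists (fun t : k.+1.-tuple gT => (thead t, [tuple of behead t])).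
  by move=> [x t] _ /=; congr (_, _); apply: val_inj.
by move=> t _; rewrite /= [t in RHS]tuple_eta.
Qed.

Lemma eq_sumT (A : {set gT}) k (F F' : seq gT -> int) :
  (forall t, size t = k -> inG A t -> F t = F' t) -> sumT A k F = sumT A k F'.
Proof. by move=> eqF; apply: eq_bigr => t At; rewrite eqF ?size_tuple. Qed.

Lemma sumT_translate (A : {group gT}) k a (F : seq gT -> int) : a \in A ->
  sumT A k (fun t => F (map (mulg a) t)) = sumT A k F.
Proof.
move=> aA; elim: k F => [|k IHk] F; first by rewrite !sumT0.
rewrite !sumTS /=.
under eq_bigr => x _ do rewrite (IHk (fun t => F (a * x :: t))).
rewrite [RHS](reindex (mulg a)) /=; first by apply: eq_bigl => x; rewrite groupMl.
by exists (mulg a^-1) => x _; rewrite ?mulKg ?mulKVg.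
Qed.

Lemma sumT_mulr (A : {set gT}) k (F : seq gT -> int) c :
  sumT A k (fun t => F t * c)%R = (sumT A k F * c)%R.
Proof. by rewrite /sumT mulr_suml. Qed.

Lemma sumT_mulrn (A : {set gT}) k (F : seq gT -> int) m :
  (sumT A k F *+ m)%R = sumT A k (fun t => F t *+ m)%R.
Proof. by rewrite /sumT sumrMnl. Qed.

End TupleSums.

Definition mulseq (gT : finGroupType) (h n : seq gT) : seq gT :=
  [seq (p.1 * p.2)%g | p <- zip h n].

Section DirectProduct.
Variables (gT : finGroupType) (G H N : {group gT}).
Hypothesis defG : (H \x N)%g = G.
Local Open Scope group_scope.

Lemma sub_dprodl : H \subset G.
Proof. by case/dprodP: defG => _ <- _ _; apply: mulG_subl. Qed.

Lemma sub_dprodr : N \subset G.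
Proof. by case/dprodP: defG => _ <- _ _; apply: mulG_subr. Qed.

Lemma tiHN : H :&: N = 1.
Proof. by case/dprodP: defG. Qed.

Lemma commHN h n : h \in H -> n \in N -> n * h = h * n.
Proof.
case/dprodP: defG => _ _ cNH _ hH nN.
by have /centP/(_ h hH) := subsetP cNH n nN.
Qed.

(* |G : H| = |N|, the factor introduced by corestriction from H to G. *)
Lemma index_dprodl : #|G : H| = #|N|.
Proof. by rewrite -divgS ?sub_dprodl // -(dprod_card defG) mulKn. Qed.

Lemma divgr1 : divgr H N 1 = 1.
Proof. by rewrite -{1}(mulg1 1) divgrMid ?tiHN. Qed.

Lemma sum_dprod (F : gT -> int) :
  (\sum_(x in G) F x = \sum_(h in H) \sum_(n in N) F (h * n)%g)%R.
Proof.
rewrite (pair_big_dep (fun h => h \in H) (fun _ n => n \in N) (fun h n => F (h * n))).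
rewrite (reindex (fun x => (divgr H N x, remgr H N x))) /=.
  apply: eq_big => x; last by move=> _; rewrite -(divgr_eq H N).
  case/dprodP: defG => _ <- _ _; apply/idP/andP.
    by move=> xHN; rewrite mem_divgr ?mem_remgr.
  by case=> xH xN; rewrite [x](divgr_eq H N) mem_mulg.
exists (fun p => p.1 * p.2); first by move=> x _ /=; rewrite -(divgr_eq H N).
by move=> [h n] /andP[/= hH nN]; rewrite /= divgrMid ?remgrMid // tiHN.
Qed.

Lemma sumT_dprod k (F : seq gT -> int) :
  sumT G k F = sumT H k (fun h => sumT N k (fun n => F (mulseq h n))).
Proof.
elim: k F => [|k IHk] F; first by rewrite !sumT0.
rewrite sumTS.
under eq_bigr => x _ do rewrite (IHk (fun t => F (x :: t))).
rewrite sum_dprod sumTS; apply: eq_bigr => h1 _.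
under [RHS]eq_sumT => t _ _ do rewrite sumTS.
by rewrite /sumT exchange_big.
Qed.

Lemma inG_mulseq h n : inG H h -> inG N n -> inG G (mulseq h n).
Proof.
elim: h n => [|x h IHh] [|y n] //= /andP[xH hH] /andP[yN nN].
rewrite IHh // andbT groupM //.
  exact: subsetP sub_dprodl _ xH.
exact: subsetP sub_dprodr _ yN.
Qed.

Lemma size_mulseq (h n : seq gT) : size h = size n -> size (mulseq h n) = size h.
Proof. by move=> eq_sz; rewrite size_map size_zip eq_sz minnn. Qed.

(* Inflation only sees the H-components. *)
Lemma divgr_mulseq h n : size h = size n -> inG H h -> inG N n ->
  map (divgr H N) (mulseq h n) = h.
Proof.
elim: h n => [|x h IHh] [|y n] //= [eq_sz] /andP[xH hH] /andP[yN nN].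
by rewrite divgrMid ?tiHN // IHh.
Qed.

Lemma translate_mulseq a h n : a \in N -> inG H h ->
  map (mulg a) (mulseq h n) = mulseq h (map (mulg a) n).
Proof.
move=> aN; elim: h n => [|x h IHh] [|y n] //= /andP[xH hH].
by rewrite IHh // mulgA (commHN xH aN) -mulgA.
Qed.

Lemma sum_fibre_rsd k (f : seq gT -> int) (h : seq gT) :
  g_invariant G k.+1 f -> size h = k.+1 -> inG H h ->
  sumT N k.+1 (fun n => f (mulseq h n)) = (rsd N k.+1 f h *+ #|N|)%R.
Proof.
case: h => [|h1 h] // f_inv [sz_h] /= /andP[h1H hH].
rewrite /rsd /= sumTS -sumr_const; apply: eq_bigr => n1 n1N.
have n1VN : n1^-1 \in N by rewrite groupV.
(* translating by n1^-1 strips n1 from the first coordinate ... *)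
have strip n : size n = k -> inG N n ->
    f (h1 * n1 :: mulseq h n) = f (h1 :: mulseq h (map (mulg n1^-1) n)).
  move=> sz_n nN; rewrite -translate_mulseq // -[LHS](f_inv n1^-1).
  - by rewrite /= mulgA (commHN h1H n1VN) -mulgA mulVg mulg1.
  - exact: subsetP sub_dprodr _ n1VN.
  - by rewrite /= size_mulseq ?sz_h.
  by apply: (inG_mulseq (h := h1 :: h) (n := n1 :: n)); rewrite /= ?h1H ?n1N.
(* ... and the translation is absorbed by the sum over N^k. *)
rewrite (eq_sumT strip).
exact: (sumT_translate k (fun n => f (h1 :: mulseq h n)) n1VN).
Qed.

Lemma cup_infl_cor i (f psi : seq gT -> int) : (1 <= i)%N ->
  g_invariant G i f ->
  cup G i f (infl H N psi) 1 = cor0 G H (cup H i (rsd N i f) psi 1).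
Proof.
case: i => [|k] // _ f_inv.
rewrite /cup /cor0 sumr_const -/(#|G : H|) index_dprodl sumT_mulrn sumT_dprod.
apply: eq_sumT => h sz_h hH.
have infl_fibre n : size n = k.+1 -> inG N n ->
    (f (mulseq h n) * infl H N psi (rcons (rev (mulseq h n)) 1%g)
     = f (mulseq h n) * psi (rcons (rev h) 1%g))%R.
  by move=> sz_n nN; rewrite /infl map_rcons map_rev divgr_mulseq ?sz_h ?divgr1.
rewrite (eq_sumT infl_fibre) sumT_mulr sum_fibre_rsd //.
by rewrite mulrnAl.
Qed.

End DirectProduct.

(* A class in Ĥ^0(G,Z) = Z/|G| is represented by the (constant) value of a
   G-invariant 0-cocycle X_0 -> Z; equality of classes = congruence mod |G|. *)
Theorem lemma5 (gT : finGroupType) (G H N : {group gT}) (i : nat)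
  (hGHN : (H \x N)%g = G) (hi : (2 <= i)%N)
  (f psi : seq gT -> int)
  (f_inv : g_invariant G i f) (f_coc : neg_cocycle G i f)
  (psi_inv : g_invariant H i.+1 psi) (psi_coc : pos_cocycle H i psi) :
  (cup G i f (infl H N psi) 1%g
     = cor0 G H (cup H i (rsd N i f) psi 1%g) %[mod #|G|%:Z])%Z.
Proof. by rewrite (cup_infl_cor hGHN) // ltnW. Qed.
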